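(* Let $G$ be a classical subgroup of $\mathrm{GL}(N+1,\mathbb{C})$ (for instance $G=\mathrm{SL}(N+1,\mathbb{C})$), let $V$ and $W$ be finite-dimensional rational complex representations of $G$ equipped with Hermitian norms $\|\cdot\|$, and let $v\in V\setminus\{0\}$, $w\in W\setminus\{0\}$. Define $p_{v,w}:G\to\mathbb{R}$ by $p_{v,w}(\sigma)=\log\|\sigma(w)\|^2-\log\|\sigma(v)\|^2$. Then $p_{v,w}$ is proper along every one-parameter subgroup of $G$ (i.e. $p_{v,w}(\lambda(t))\to+\infty$ as $t\to0$ for every one-parameter subgroup $\lambda$) if and only if $(v,w)$ is numerically stable; and $p_{v,w}$ is bounded from below along every one-parameter subgroup of $G$ (i.e. $p_{v,w}(\lambda(t))$ is bounded below as $t\to0$ for every one-parameter subgroup $\lambda$) if and only if $(v,w)$ is numerically semistable.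
   Context: A one-parameter subgroup of $G$ is a non-trivial algebraic group homomorphism $\lambda:\mathbb{C}^*\to G$. For a representation $V$, $x\in V\setminus\{0\}$ and a one-parameter subgroup $\lambda$, the weight $w_\lambda(x)$ is the unique integer such that $\lim_{\alpha\to0}\alpha^{-w_\lambda(x)}\lambda(\alpha)x$ exists in $V$ and is non-zero. The pair $(v,w)$ is numerically semistable if $w_\lambda(w)\le w_\lambda(v)$ for all one-parameter subgroups $\lambda$ of $G$, and numerically stable if $w_\lambda(w)<w_\lambda(v)$ for all one-parameter subgroups $\lambda$ of $G$. *)

From HB Require Import structures.
From mathcomp Require Import all_boot all_order all_algebra.
From mathcomp Require Import complex.
From mathcomp Require Import boolp classical_sets reals exp.

Set Implicit Arguments.
Unset Strict Implicit.
Unset Printing Implicit Defensive.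

Import Order.TTheory GRing.Theory Num.Theory.
Local Open Scope ring_scope.

Definition cabs (R : rcfType) (z : R[i]) : R :=
  Num.sqrt (complex.Re z ^+ 2 + complex.Im z ^+ 2).

Inductive polyfun (R : rcfType) (k : nat) : ('M[R[i]]_k -> R[i]) -> Prop :=
  | pf_const (c : R[i]) : polyfun (fun _ => c)
  | pf_coord (i j : 'I_k) : polyfun (fun A => A i j)
  | pf_add f g : polyfun f -> polyfun g -> polyfun (fun A => f A + g A)
  | pf_mul f g : polyfun f -> polyfun g -> polyfun (fun A => f A * g A).

(** G is a linear algebraic group: a subgroup of GL(k, C) which is
    Zariski closed (common zero set in GL(k,C) of polynomial functions). *)
Definition algebraic_subgroup (R : rcfType) (k : nat)
    (G : set 'M[R[i]]_k) : Prop :=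
  [/\ forall g, G g -> g \in unitmx,
      G 1%:M,
      (forall g h, G g -> G h -> G (g *m h)),
      (forall g, G g -> G (invmx g)) &
      exists F : set ('M[R[i]]_k -> R[i]),
        (forall f, F f -> polyfun f) /\
        (forall g, G g <-> (g \in unitmx /\ forall f, F f -> f g = 0))].

Definition regular_on (R : rcfType) (k : nat) (G : set 'M[R[i]]_k)
    (f : 'M[R[i]]_k -> R[i]) : Prop :=
  exists P, polyfun P /\ exists e : nat,
    forall g, G g -> f g = P g / (\det g) ^+ e.

Definition rational_rep (R : rcfType) (k n : nat) (G : set 'M[R[i]]_k)
    (rho : 'M[R[i]]_k -> 'M[R[i]]_n) : Prop :=
  [/\ forall g, G g -> rho g \in unitmx,
      (forall g h, G g -> G h -> rho (g *m h) = rho g *m rho h) &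
      forall i j, regular_on G (fun g => rho g i j)].

(** one-parameter subgroup: non-trivial algebraic group homomorphism
    C^* -> G (entries are Laurent polynomials in alpha) *)
Definition one_param_subgroup (R : rcfType) (k : nat) (G : set 'M[R[i]]_k)
    (lam : R[i] -> 'M[R[i]]_k) : Prop :=
  [/\ forall a, a != 0 -> G (lam a),
      (forall a b, a != 0 -> b != 0 -> lam (a * b) = lam a *m lam b),
      (forall i j, exists (p : {poly R[i]}) (e : nat),
          forall a, a != 0 -> lam a i j = p.[a] / a ^+ e) &
      exists a, a != 0 /\ lam a != 1%:M].

Definition is_weight (R : rcfType) (k n : nat)
    (rho : 'M[R[i]]_k -> 'M[R[i]]_n) (lam : R[i] -> 'M[R[i]]_k)
    (x : 'cV[R[i]]_n) (w : int) : Prop :=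
  exists y : 'cV[R[i]]_n, y != 0 /\
    forall eps : R, 0 < eps -> exists2 delta : R, 0 < delta &
      forall a : R[i], a != 0 -> cabs a < delta ->
        forall i, cabs (a ^ (- w) * (rho (lam a) *m x) i 0 - y i 0) < eps.

Definition num_semistable (R : rcfType) (k n m : nat) (G : set 'M[R[i]]_k)
    (rV : 'M[R[i]]_k -> 'M[R[i]]_n) (rW : 'M[R[i]]_k -> 'M[R[i]]_m)
    (v : 'cV[R[i]]_n) (w : 'cV[R[i]]_m) : Prop :=
  forall lam, one_param_subgroup G lam ->
    forall a b : int, is_weight rV lam v a -> is_weight rW lam w b -> b <= a.

Definition num_stable (R : rcfType) (k n m : nat) (G : set 'M[R[i]]_k)
    (rV : 'M[R[i]]_k -> 'M[R[i]]_n) (rW : 'M[R[i]]_k -> 'M[R[i]]_m)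
    (v : 'cV[R[i]]_n) (w : 'cV[R[i]]_m) : Prop :=
  forall lam, one_param_subgroup G lam ->
    forall a b : int, is_weight rV lam v a -> is_weight rW lam w b -> b < a.

(** Hermitian norm on C^n given by a Hermitian positive-definite matrix H:
    ||x||^2 = x^* H x *)
Definition hnorm2 (R : rcfType) (n : nat) (H : 'M[R[i]]_n) (x : 'cV[R[i]]_n)
    : R := complex.Re (((map_mx conjc x)^T *m H *m x) 0 0).

Definition hermitian_pd (R : rcfType) (n : nat) (H : 'M[R[i]]_n) : Prop :=
  H^T = map_mx conjc H /\ forall x : 'cV[R[i]]_n, x != 0 -> 0 < hnorm2 H x.

Definition p_vw (R : realType) (k n m : nat)
    (rV : 'M[R[i]]_k -> 'M[R[i]]_n) (rW : 'M[R[i]]_k -> 'M[R[i]]_m)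
    (HV : 'M[R[i]]_n) (HW : 'M[R[i]]_m)
    (v : 'cV[R[i]]_n) (w : 'cV[R[i]]_m) (sigma : 'M[R[i]]_k) : R :=
  ln (hnorm2 HW (rW sigma *m w)) - ln (hnorm2 HV (rV sigma *m v)).

Definition proper_along (R : realType) (k : nat) (f : 'M[R[i]]_k -> R)
    (lam : R[i] -> 'M[R[i]]_k) : Prop :=
  forall M : R, exists2 delta : R, 0 < delta &
    forall t : R[i], t != 0 -> cabs t < delta -> M < f (lam t).

Definition bounded_below_along (R : realType) (k : nat) (f : 'M[R[i]]_k -> R)
    (lam : R[i] -> 'M[R[i]]_k) : Prop :=
  exists M : R, exists2 delta : R, 0 < delta &
    forall t : R[i], t != 0 -> cabs t < delta -> M <= f (lam t).

From HB Require Import structures.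
From mathcomp Require Import all_boot all_order all_algebra.
From mathcomp Require Import complex.
From mathcomp Require Import boolp classical_sets reals exp.
From mathcomp Require Import ring lra.
Set Implicit Arguments.
Unset Strict Implicit.
Unset Printing Implicit Defensive.
Import Order.TTheory GRing.Theory Num.Theory.
Local Open Scope ring_scope.

(* Along a one-parameter subgroup [lam] the coordinates of [rho (lam t) *m x]
   are Laurent polynomials in [t]: the regular functions [P / det ^+ e] become
   Laurent polynomials because [det (lam t)] is a Laurent polynomial without
   zeros on [C^*], hence a monomial.  So [x] has a weight [w], i.e.
   [t ^ (- w) *: rho (lam t) *m x] tends to a non-zero limit, and then
   [||rho (lam t) x||^2] is within a factor [2] of [c |t|^(2w)] for small [t].
   Consequently [p_vw (lam t) = 2 (b - a) ln |t| + O(1)] as [t -> 0], where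
   [a], [b] are the weights of [v], [w]; properness (resp. boundedness below)
   along [lam] is therefore decided by the sign of [b - a]. *)

Section ComplexModulus.
Variable R : realType.
Local Notation C := (R[i]).

Lemma cabsE (z : C) : `|z| = ((cabs z)%:C)%C.
Proof. by rewrite normc_def. Qed.

Lemma cabs_ge0 (z : C) : 0 <= cabs z.
Proof. by rewrite /cabs sqrtr_ge0. Qed.

Lemma cabsM (x y : C) : cabs (x * y) = cabs x * cabs y.
Proof. by apply: (@complexI R); rewrite rmorphM /= -!cabsE normrM. Qed.

Lemma cabsD (x y : C) : cabs (x + y) <= cabs x + cabs y.
Proof. by rewrite -lecR rmorphD /= -!cabsE ler_normD. Qed.

Lemma cabs0 : cabs (0 : C) = 0.
Proof. by rewrite /cabs /= expr0n /= addr0 sqrtr0. Qed.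

Lemma cabs_eq0 (x : C) : (cabs x == 0) = (x == 0).
Proof. by rewrite -[x == 0]normr_eq0 cabsE eq_complex /= eqxx andbT. Qed.

Lemma cabs_gt0 (x : C) : x != 0 -> 0 < cabs x.
Proof. by move=> hx; rewrite lt_neqAle cabs_ge0 andbT eq_sym cabs_eq0. Qed.

Lemma cabsC (k : R) : 0 <= k -> cabs (k%:C)%C = k.
Proof. by move=> hk; apply: (@complexI R); rewrite -cabsE ger0_norm // ler0c. Qed.

Lemma cabsJ (x : C) : cabs (conjc x) = cabs x.
Proof. by apply: (@complexI R); rewrite -!cabsE normcJ. Qed.

Lemma cabs_Re (x : C) : `|complex.Re x| <= cabs x.
Proof. by rewrite -lecR -cabsE normc_ge_Re. Qed.

Lemma cabsX (x : C) n : cabs (x ^+ n) = cabs x ^+ n.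
Proof. by apply: (@complexI R); rewrite rmorphXn /= -!cabsE normrX. Qed.

Lemma cabsV (x : C) : cabs (x^-1) = (cabs x)^-1.
Proof. by apply: (@complexI R); rewrite fmorphV /= -!cabsE normfV. Qed.

Lemma cabsXz (x : C) (w : int) : cabs (x ^ w) = cabs x ^ w.
Proof.
case: w => n; first by rewrite -!exprnP cabsX.
by rewrite NegzE -!exprnN cabsV cabsX.
Qed.

Lemma ReB (u v : C) : complex.Re (u - v) = complex.Re u - complex.Re v.
Proof. by case: u v => [? ?] [? ?]. Qed.

Lemma ReMC (k : R) (z : C) : complex.Re ((k%:C)%C * z) = k * complex.Re z.
Proof. by case: z => x y /=; rewrite !mul0r subr0. Qed.

Lemma exists_small_nonzero (d : R) : 0 < d -> exists t : C, t != 0 /\ cabs t < d.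
Proof.
move=> d0; exists ((d / 2)%:C)%C; split.
  by rewrite eq_complex /= negb_and (lt0r_neq0 _) //= divr_gt0.
by rewrite cabsC; [lra | rewrite ltW // divr_gt0].
Qed.

End ComplexModulus.

Section LimitAt0.
Variable R : realType.
Local Notation C := (R[i]).

Definition cvg0 (f : C -> C) (L : C) := forall e : R, 0 < e ->
  exists2 d : R, 0 < d & forall a, a != 0 -> cabs a < d -> cabs (f a - L) < e.

Lemma cvg0_ext f g L : cvg0 f L -> (forall a, a != 0 -> f a = g a) -> cvg0 g L.
Proof.
move=> hf fg e he; have [d hd H] := hf e he; exists d => // a a0 ad.
by rewrite -fg // H.
Qed.

Lemma cvg0_cst c : cvg0 (fun _ => c) c.
Proof. by move=> e he; exists 1 => // a _ _; rewrite subrr cabs0. Qed.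

Lemma cvg0_id : cvg0 id 0.
Proof. by move=> e he; exists e => // a _; rewrite subr0. Qed.

Lemma cvg0D f g L M : cvg0 f L -> cvg0 g M -> cvg0 (fun a => f a + g a) (L + M).
Proof.
move=> hf hg e he; have he2 : 0 < e / 2 by rewrite divr_gt0.
have [d1 hd1 H1] := hf _ he2; have [d2 hd2 H2] := hg _ he2.
exists (Num.min d1 d2); first by rewrite lt_min hd1 hd2.
move=> a a0; rewrite lt_min => /andP[a1 a2].
have -> : f a + g a - (L + M) = (f a - L) + (g a - M) by ring.
apply: (le_lt_trans (cabsD _ _)).
have := H1 a a0 a1; have := H2 a a0 a2; lra.
Qed.

Lemma cvg0J f L : cvg0 f L -> cvg0 (fun a => conjc (f a)) (conjc L).
Proof.
move=> hf e he; have [d hd H] := hf e he; exists d => // a a0 ad.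
by rewrite -rmorphB cabsJ H.
Qed.

Lemma cvg0M0 f g : cvg0 f 0 -> cvg0 g 0 -> cvg0 (fun a => f a * g a) 0.
Proof.
move=> hf hg e he.
have [d1 hd1 H1] := hf _ he; have [d2 hd2 H2] := hg _ ltr01.
exists (Num.min d1 d2); first by rewrite lt_min hd1 hd2.
move=> a a0; rewrite lt_min => /andP[a1 a2].
have := H1 a a0 a1; have := H2 a a0 a2; rewrite !subr0 cabsM => h2 h1.
have g0 := cabs_ge0 (g a); have f0 := cabs_ge0 (f a).
nra.
Qed.

Lemma cvg0Ml0 c f : cvg0 f 0 -> cvg0 (fun a => c * f a) 0.
Proof.
move=> hf e he.
have hc : 0 < cabs c + 1 by have := cabs_ge0 c; lra.
have [d hd H] := hf (e / (cabs c + 1)) (divr_gt0 he hc).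
exists d => // a a0 ad; have := H a a0 ad; rewrite !subr0 cabsM.
rewrite ltr_pdivlMr // => h.
have f0 := cabs_ge0 (f a); have c0 := cabs_ge0 c; nra.
Qed.

Lemma cvg0_subr0 f L : cvg0 f L <-> cvg0 (fun a => f a - L) 0.
Proof.
split=> hf e he; have [d hd H] := hf e he; exists d => // a a0 ad.
  by rewrite subr0 H.
by have := H a a0 ad; rewrite subr0.
Qed.

Lemma cvg0M f g L M : cvg0 f L -> cvg0 g M -> cvg0 (fun a => f a * g a) (L * M).
Proof.
move=> /cvg0_subr0 hf /cvg0_subr0 hg; apply/cvg0_subr0.
have h := cvg0D (cvg0D (cvg0M0 hf hg) (cvg0Ml0 L hg)) (cvg0Ml0 M hf).
by rewrite !addr0 in h; apply: (cvg0_ext h) => a _; ring.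
Qed.

Lemma cvg0_sum I (r : seq I) (F : I -> C -> C) (L : I -> C) :
  (forall i, cvg0 (F i) (L i)) ->
  cvg0 (fun a => \sum_(i <- r) F i a) (\sum_(i <- r) L i).
Proof.
move=> hF; elim: r => [|i r IH].
  by rewrite big_nil; apply: (cvg0_ext (cvg0_cst 0)) => a _; rewrite big_nil.
rewrite big_cons; apply: (cvg0_ext (cvg0D (hF i) IH)) => a _.
by rewrite big_cons.
Qed.

Lemma cvg0_horner (q : {poly C}) : cvg0 (fun a => q.[a]) q.[0].
Proof.
elim/poly_ind: q => [|q c IH].
  by rewrite horner0; apply: (cvg0_ext (cvg0_cst 0)) => a _; rewrite horner0.
rewrite hornerMXaddC; apply: (cvg0_ext (cvg0D (cvg0M IH cvg0_id) (cvg0_cst c))).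
by move=> a _; rewrite hornerMXaddC.
Qed.

Lemma fin_common_radius (I : finType) (P : I -> R -> Prop) :
  (forall i d d', 0 < d' -> d' <= d -> P i d -> P i d') ->
  (forall i, exists2 d, 0 < d & P i d) -> exists2 d, 0 < d & forall i, P i d.
Proof.
move=> mono hP.
suff [d hd H] : exists2 d, 0 < d & forall i, i \in enum I -> P i d.
  by exists d => // i; apply: H; rewrite mem_enum.
elim: (enum I) => [|i s [d hd H]]; first by exists 1.
have [d1 hd1 H1] := hP i.
exists (Num.min d1 d); first by rewrite lt_min hd1 hd.
move=> j; rewrite inE => /orP[/eqP -> | js].
  by apply: (mono _ d1); rewrite ?lt_min ?hd1 ?hd ?ge_min ?lexx.
by apply: (mono _ d); rewrite ?lt_min ?hd1 ?hd ?ge_min ?lexx ?orbT //; apply: H.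
Qed.

End LimitAt0.

Section HermitianNorm.
Variable R : realType.
Local Notation C := (R[i]).

Lemma hform_sum n (H : 'M[C]_n) (x : 'cV[C]_n) :
  ((map_mx conjc x)^T *m H *m x) 0 0 =
  \sum_k (\sum_l conjc (x l 0) * H l k) * x k 0.
Proof.
rewrite mxE; apply: eq_bigr => k _; rewrite mxE; congr (_ * _).
by apply: eq_bigr => l _; rewrite !mxE.
Qed.

Lemma hnorm2Z n (H : 'M[C]_n) (c : C) (x : 'cV[C]_n) :
  hnorm2 H (c *: x) = cabs c ^+ 2 * hnorm2 H x.
Proof.
rewrite /hnorm2 !hform_sum -ReMC; congr complex.Re.
rewrite rmorphXn /= -cabsE sqr_normc mulr_sumr; apply: eq_bigr => k _.
rewrite mxE (eq_bigr (fun l => conjc c * (conjc (x l 0) * H l k))) => [|l _].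
  by rewrite -mulr_sumr; ring.
by rewrite mxE rmorphM mulrA.
Qed.

Lemma hnorm2_cvg0 n (H : 'M[C]_n) (z : C -> 'cV[C]_n) (y : 'cV[C]_n) :
  (forall i, cvg0 (fun a => z a i 0) (y i 0)) ->
  forall e : R, 0 < e -> exists2 d : R, 0 < d & forall a, a != 0 ->
    cabs a < d -> `|hnorm2 H (z a) - hnorm2 H y| < e.
Proof.
move=> hz.
have hq : cvg0 (fun a => ((map_mx conjc (z a))^T *m H *m (z a)) 0 0)
              (((map_mx conjc y)^T *m H *m y) 0 0).
  rewrite hform_sum; apply: (cvg0_ext _ (fun a _ => esym (hform_sum H (z a)))).
  apply: cvg0_sum => k; apply: cvg0M (hz k); apply: cvg0_sum => l.
  exact: cvg0M (cvg0J (hz l)) (cvg0_cst _).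
move=> e he; have [d hd Hd] := hq e he; exists d => // a a0 ad.
by rewrite /hnorm2 -ReB; exact: le_lt_trans (cabs_Re _) (Hd a a0 ad).
Qed.

Lemma hnorm2_weight_bounds k n (rho : 'M[C]_k -> 'M[C]_n) lam
    (x : 'cV[C]_n) (w : int) (H : 'M[C]_n) :
  is_weight rho lam x w -> hermitian_pd H ->
  exists2 h : R, 0 < h & exists2 d : R, 0 < d & forall a, a != 0 -> cabs a < d ->
    h / 2 * (cabs a ^ w) ^+ 2 <= hnorm2 H (rho (lam a) *m x) <=
    2 * h * (cabs a ^ w) ^+ 2.
Proof.
move=> [y [y0 hy]] [_ hpd].
pose z a := a ^ (- w) *: (rho (lam a) *m x).
have hz : forall i, cvg0 (fun a => z a i 0) (y i 0).
  move=> i e he; have [d hd Hd] := hy e he; exists d => // a a0 ad.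
  by rewrite /z mxE; apply: Hd.
have hy0 := hpd y y0; set h := hnorm2 H y in hy0 *.
exists h => //; have [d hd Hd] := hnorm2_cvg0 H hz (divr_gt0 hy0 (ltr0n R 2)).
exists d => // a a0 ad.
have -> : rho (lam a) *m x = a ^ w *: z a.
  by rewrite /z scalerA -expfzDr // subrr expr0z scale1r.
rewrite hnorm2Z cabsXz.
have := Hd a a0 ad; rewrite ltr_norml => /andP[h1 h2].
have p0 : 0 <= (cabs a ^ w) ^+ 2 by rewrite exprn_even_ge0.
apply/andP; split; nra.
Qed.

End HermitianNorm.

Section Laurent.
Variable R : realType.
Local Notation C := (R[i]).

Definition laurent (f : C -> C) := exists (p : {poly C}) (e : nat),
  forall a, a != 0 -> f a = p.[a] / a ^+ e.

Lemma laurent_ext f g : laurent f -> (forall a, a != 0 -> f a = g a) -> laurent g.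
Proof. by move=> [p [e h]] fg; exists p, e => a a0; rewrite -fg // h. Qed.

Lemma laurent_cst c : laurent (fun _ => c).
Proof. by exists c%:P, 0%N => a _; rewrite hornerC expr0 divr1. Qed.

Lemma laurent_id : laurent id.
Proof. by exists 'X, 0%N => a _; rewrite hornerX expr0 divr1. Qed.

Lemma laurent_inv : laurent (fun a => a^-1).
Proof. by exists 1, 1%N => a _; rewrite hornerC expr1 div1r. Qed.

Lemma laurentD f g : laurent f -> laurent g -> laurent (fun a => f a + g a).
Proof.
move=> [p [e hp]] [q [e' hq]].
exists (p * 'X^e' + q * 'X^e), (e + e')%N => a a0.
rewrite hp // hq // hornerD !hornerM !hornerXn exprD; field.
by rewrite !expf_neq0.
Qed.

Lemma laurentM f g : laurent f -> laurent g -> laurent (fun a => f a * g a).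
Proof.
move=> [p [e hp]] [q [e' hq]].
exists (p * q), (e + e')%N => a a0.
rewrite hp // hq // hornerM exprD; field.
by rewrite !expf_neq0.
Qed.

Lemma laurentX f m : laurent f -> laurent (fun a => f a ^+ m).
Proof.
move=> hf; elim: m => [|m IH].
  by apply: laurent_ext (laurent_cst 1) _ => a _; rewrite expr0.
by apply: laurent_ext (laurentM hf IH) _ => a _; rewrite exprS.
Qed.

Lemma laurent_sum I (r : seq I) (F : I -> C -> C) :
  (forall i, laurent (F i)) -> laurent (fun a => \sum_(i <- r) F i a).
Proof.
move=> hF; elim: r => [|i r IH].
  by apply: laurent_ext (laurent_cst 0) _ => a _; rewrite big_nil.
by apply: laurent_ext (laurentD (hF i) IH) _ => a _; rewrite big_cons.
Qed.

Lemma laurent_prod I (r : seq I) (F : I -> C -> C) :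
  (forall i, laurent (F i)) -> laurent (fun a => \prod_(i <- r) F i a).
Proof.
move=> hF; elim: r => [|i r IH].
  by apply: laurent_ext (laurent_cst 1) _ => a _; rewrite big_nil.
by apply: laurent_ext (laurentM (hF i) IH) _ => a _; rewrite big_cons.
Qed.

Lemma laurent_polyfun k (lam : C -> 'M[C]_k) (P : 'M[C]_k -> C) :
  (forall i j, laurent (fun a => lam a i j)) -> polyfun P ->
  laurent (fun a => P (lam a)).
Proof.
move=> hl; elim=> [c|i j|f g _ hf _ hg|f g _ hf _ hg].
- exact: laurent_cst.
- exact: hl.
- exact: laurentD hf hg.
- exact: laurentM hf hg.
Qed.

Lemma laurent_det k (lam : C -> 'M[C]_k) :
  (forall i j, laurent (fun a => lam a i j)) -> laurent (fun a => \det (lam a)).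
Proof.
move=> hl; apply: laurent_sum => s; apply: laurentM; first exact: laurent_cst.
by apply: laurent_prod => i; apply: hl.
Qed.

Lemma factor_common_Xn (I : finType) (P : I -> {poly C}) :
  (exists i, P i != 0) ->
  exists (k : nat) (q : I -> {poly C}),
    (forall i, P i = q i * 'X^k) /\ exists i, (q i).[0] != 0.
Proof.
move: (leqnn (\sum_i size (P i))); move: {2}(\sum_i size (P i)) => s.
elim: s P => [|s IH] P hs [i0 hi0].
  move: hs; rewrite leqn0 => /eqP hs.
  have : size (P i0) == 0%N by rewrite -leqn0 -hs (bigD1 i0) //= leq_addr.
  by rewrite size_poly_eq0 (negbTE hi0).
have [[i hi]|hn] := pselect (exists i, (P i).[0] != 0).
  by exists 0%N, P; split=> [j|]; [rewrite expr0 mulr1 | exists i].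
pose P' i := P i %/ 'X.
have hP i : P i = P' i * 'X.
  have : root (P i) 0 by apply/negPn/negP => hi; apply: hn; exists i.
  by rewrite /P' => h0; rewrite divpK // -[X in X %| _]subr0 -polyC0 dvdp_XsubCl.
have hi0' : P' i0 != 0 by apply: contra hi0; rewrite hP => /eqP ->; rewrite mul0r.
have hs' : (\sum_i size (P' i) <= s)%N.
  rewrite -ltnS; apply: (leq_trans _ hs).
  rewrite [X in (_ < X)%N](bigD1 i0) //= [X in (X < _)%N](bigD1 i0) //=.
  rewrite hP size_mulX // addSn ltnS leq_add2l; apply: leq_sum => i _.
  rewrite hP; have [->|h] := eqVneq (P' i) 0; first by rewrite mul0r size_poly0.
  by rewrite size_mulX.
have [k [q [hq hq0]]] := IH P' hs' (ex_intro _ i0 hi0').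
by exists k.+1, q; split=> // i; rewrite hP hq exprSr mulrA.
Qed.

(* Uses that [C] is algebraically closed. *)
Lemma nonvanishing_poly_monomial (d : {poly C}) :
  d != 0 -> (forall a, a != 0 -> d.[a] != 0) ->
  exists (c : C) (k : nat), c != 0 /\ d = c%:P * 'X^k.
Proof.
move=> d0 hd.
have [k [q [hq [i hi]]]] := @factor_common_Xn 'I_1 (fun _ => d) (ex_intro _ ord0 d0).
have hq0 a : (q i).[a] != 0.
  have [->|a0] := eqVneq a 0; first by [].
  by have := hd a a0; rewrite (hq i) hornerM; apply: contra => /eqP ->; rewrite mul0r.
have /eqP hs : size (q i) == 1%N.
  by apply/negPn/negP => /closed_rootP [a /rootP ha]; have := hq0 a; rewrite ha eqxx.
exists (q i)`_0, k; split.
  by apply: contra hi => /eqP h; rewrite (size1_polyC (eq_leq hs)) h hornerC.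
by rewrite (hq i) -(size1_polyC (eq_leq hs)).
Qed.

Lemma laurent_inv_nonvanishing f :
  laurent f -> (forall a, a != 0 -> f a != 0) -> laurent (fun a => (f a)^-1).
Proof.
move=> [p [e hp]] hf.
have hp0 a : a != 0 -> p.[a] != 0.
  by move=> a0; have := hf a a0; rewrite hp //; apply: contra => /eqP ->; rewrite mul0r.
have p0 : p != 0 by apply: contra (hp0 1 (oner_neq0 _)) => /eqP ->; rewrite horner0.
have [c [m [c0 hpc]]] := nonvanishing_poly_monomial p0 hp0.
apply: (laurent_ext (laurentM (laurentM (laurent_cst c^-1) (laurentX e laurent_id))
                       (laurentX m laurent_inv))).
move=> a a0; rewrite hp // hpc hornerM hornerC hornerXn exprVn.
by field; rewrite c0 !expf_neq0.
Qed.

Lemma laurent_vec_weight n (X : C -> 'cV[C]_n) :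
  (forall i, laurent (fun a => X a i 0)) -> X 1 != 0 ->
  exists (w : int) (y : 'cV[C]_n), y != 0 /\
    forall i, cvg0 (fun a => a ^ (- w) * X a i 0) (y i 0).
Proof.
move=> hX X1.
have /fin_all_exists [f hf] : forall i, exists pe : {poly C} * nat,
    forall a, a != 0 -> X a i 0 = pe.1.[a] / a ^+ pe.2.
  by move=> i; have [p [e h]] := hX i; exists (p, e).
pose E := (\sum_i (f i).2)%N.
pose P i := (f i).1 * 'X^(E - (f i).2).
have hE i a : a != 0 -> X a i 0 = (P i).[a] / a ^+ E.
  move=> a0; rewrite hf // hornerM hornerXn.
  have hle : ((f i).2 <= E)%N by rewrite /E (bigD1 i) //= leq_addr.
  by rewrite -{2}(subnKC hle) exprD; field; rewrite !expf_neq0.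
have hP : exists i, P i != 0.
  apply/not_existsP => hn; move/eqP: X1; apply; apply/matrixP => i j.
  rewrite ord1 !mxE hE ?oner_neq0 //.
  by have /negP/negPn/eqP -> := hn i; rewrite horner0 mul0r.
have [k [q [hq [i0 hi0]]]] := factor_common_Xn hP.
exists (k%:Z - E%:Z), (\col_i (q i).[0]); split.
  by apply: contra hi0 => /eqP /matrixP /(_ i0 0); rewrite !mxE => ->.
move=> i; rewrite mxE; apply: cvg0_ext (cvg0_horner (q i)) _ => a a0.
rewrite hE // hq hornerM hornerXn opprB expfzDr // -exprnP -exprnN.
by field; rewrite !expf_neq0.
Qed.

End Laurent.

Section Weights.
Variable R : realType.
Local Notation C := (R[i]).

Lemma laurent_rep_one_param k n (G : set 'M[C]_k) (rho : 'M[C]_k -> 'M[C]_n) lam :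
  (forall g, G g -> g \in unitmx) ->
  rational_rep G rho -> one_param_subgroup G lam ->
  forall i j, laurent (fun a => rho (lam a) i j).
Proof.
move=> hGu [_ _ hreg] [hlG _ hll _] i j.
have hl i' j' : laurent (fun a => lam a i' j').
  by have [p [e h]] := hll i' j'; exists p, e.
have hdet : laurent (fun a => (\det (lam a))^-1).
  apply: laurent_inv_nonvanishing (laurent_det hl) _ => a a0.
  by rewrite -unitfE -unitmxE; apply: hGu; apply: hlG.
have [P [hPf [e hPe]]] := hreg i j.
apply: (laurent_ext (laurentM (laurent_polyfun hl hPf) (laurentX e hdet))).
by move=> a a0; rewrite hPe ?exprVn //; apply: hlG.
Qed.

Lemma weight_exists k n (G : set 'M[C]_k) (rho : 'M[C]_k -> 'M[C]_n) lam
    (x : 'cV[C]_n) :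
  (forall g, G g -> g \in unitmx) ->
  rational_rep G rho -> one_param_subgroup G lam -> x != 0 ->
  exists w, is_weight rho lam x w.
Proof.
move=> hGu hrho hlam x0.
have hX i : laurent (fun a => (rho (lam a) *m x) i 0).
  apply: (laurent_ext (laurent_sum (index_enum _) (fun j =>
    laurentM (laurent_rep_one_param hGu hrho hlam i j) (laurent_cst (x j 0))))).
  by move=> a _; rewrite mxE.
have hX1 : rho (lam 1) *m x != 0.
  have [hru _ _] := hrho; have [hlG _ _ _] := hlam.
  have hu := hru _ (hlG 1 (oner_neq0 _)).
  by apply: contra x0 => /eqP h; rewrite -(mulKmx hu x) h mulmx0.
have [w [y [y0 hy]]] := laurent_vec_weight hX hX1.
exists w, y; split=> // eps he.
have [d hd Hd] := @fin_common_radius _ _ (fun i d => forall a, a != 0 ->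
    cabs a < d -> cabs (a ^ (- w) * (rho (lam a) *m x) i 0 - y i 0) < eps)
  (fun i d d' _ hdd' h a a0 ad => h a a0 (lt_le_trans ad hdd'))
  (fun i => hy i eps he).
by exists d => // a a0 ad i; apply: Hd.
Qed.

End Weights.

Section LogLinear.
Variable R : realType.
Local Notation C := (R[i]).

Definition log_linear_near0 (g : C -> R) (s : R) : Prop :=
  exists c1 c2 : R, exists2 d : R, 0 < d & forall t : C, t != 0 -> cabs t < d ->
    c1 + s * ln (cabs t) <= g t <= c2 + s * ln (cabs t).

Lemma log_linear_near0B g1 g2 s1 s2 :
  log_linear_near0 g1 s1 -> log_linear_near0 g2 s2 ->
  log_linear_near0 (fun t => g1 t - g2 t) (s1 - s2).
Proof.
move=> [a1 [b1 [d1 d10 H1]]] [a2 [b2 [d2 d20 H2]]].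
exists (a1 - b2), (b1 - a2), (Num.min d1 d2); first by rewrite lt_min d10 d20.
move=> t t0; rewrite lt_min => /andP[t1 t2].
have /andP[l1 u1] := H1 t t0 t1; have /andP[l2 u2] := H2 t t0 t2.
by rewrite mulrBl; apply/andP; split; lra.
Qed.

Lemma lnXz (r : R) (z : int) : 0 < r -> ln (r ^ z) = z%:~R * ln r.
Proof.
move=> r0; case: z => n.
  by rewrite -exprnP lnXn // -mulr_natl.
rewrite NegzE -exprnN lnV ?posrE ?exprn_gt0 //.
by rewrite lnXn // mulrNz -mulr_natl mulNr.
Qed.

Lemma hnorm2_log_linear k n (rho : 'M[C]_k -> 'M[C]_n) lam x w H :
  is_weight rho lam x w -> hermitian_pd H ->
  log_linear_near0 (fun t => ln (hnorm2 H (rho (lam t) *m x))) (2 * w%:~R).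
Proof.
move=> hx hH; have [h h0 [d d0 Hd]] := hnorm2_weight_bounds hx hH.
exists (ln (h / 2)), (ln (2 * h)), d => // t t0 td.
have r0 := cabs_gt0 t0; have /andP[lo hi] := Hd t t0 td.
have q0 : 0 < (cabs t ^ w) ^+ 2 by rewrite exprn_gt0 // exprz_gt0.
have lq : ln ((cabs t ^ w) ^+ 2) = 2 * w%:~R * ln (cabs t).
  by rewrite lnXn ?exprz_gt0 // lnXz // mulr_natl mulrnAl.
have hlo : 0 < h / 2 * (cabs t ^ w) ^+ 2 by rewrite mulr_gt0 // divr_gt0.
have hhi : 0 < 2 * h * (cabs t ^ w) ^+ 2 by rewrite mulr_gt0 // mulr_gt0.
have N0 := lt_le_trans hlo lo.
have -> : ln (h / 2) + 2 * w%:~R * ln (cabs t) = ln (h / 2 * (cabs t ^ w) ^+ 2).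
  by rewrite [RHS]lnM ?posrE ?divr_gt0 // lq.
have -> : ln (2 * h) + 2 * w%:~R * ln (cabs t) = ln (2 * h * (cabs t ^ w) ^+ 2).
  by rewrite [RHS]lnM ?posrE ?lq // mulr_gt0.
by rewrite !ler_ln ?posrE // lo hi.
Qed.

Lemma p_vw_log_linear k n m (rV : 'M[C]_k -> 'M[C]_n) (rW : 'M[C]_k -> 'M[C]_m)
    lam HV HW v w (a b : int) :
  hermitian_pd HV -> hermitian_pd HW ->
  is_weight rV lam v a -> is_weight rW lam w b ->
  log_linear_near0 (fun t => p_vw rV rW HV HW v w (lam t)) (2 * (b - a)%:~R).
Proof.
move=> hHV hHW ha hb; rewrite intrB mulrBr.
exact: log_linear_near0B (hnorm2_log_linear hb hHW) (hnorm2_log_linear ha hHV).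
Qed.

Lemma ln_lt_near0 (u : R) :
  exists2 d : R, 0 < d & forall r, 0 < r -> r < d -> ln r < u.
Proof.
exists (sequences.expR u); first exact: expR_gt0.
by move=> r r0 rd; rewrite -[u]expRK ltr_ln // posrE expR_gt0.
Qed.

Variables (k : nat) (f : 'M[C]_k -> R) (lam : C -> 'M[C]_k) (s : R).
Hypothesis hfs : log_linear_near0 (fun t => f (lam t)) s.

Lemma proper_along_of_slope_lt0 : s < 0 -> proper_along f lam.
Proof.
have [c1 [? [d d0 Hd]]] := hfs; move=> s0 M.
have [dl dl0 Hdl] := ln_lt_near0 ((M - c1) / s).
exists (Num.min d dl); first by rewrite lt_min d0 dl0.
move=> t t0; rewrite lt_min => /andP[td tdl].
have /andP[lo _] := Hd t t0 td.
have := Hdl _ (cabs_gt0 t0) tdl.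
rewrite -(ltr_nM2l s0) mulrCA mulfV ?ltr0_neq0 // mulr1; lra.
Qed.

Lemma bounded_below_along_of_slope_le0 : s <= 0 -> bounded_below_along f lam.
Proof.
have [c1 [? [d d0 Hd]]] := hfs; move=> s0.
exists c1, (Num.min d 1); first by rewrite lt_min d0 ltr01.
move=> t t0; rewrite lt_min => /andP[td t1].
have /andP[lo _] := Hd t t0 td.
have : 0 <= s * ln (cabs t) by rewrite mulr_le0 // ln_le0 // ltW.
lra.
Qed.

Lemma not_proper_along_of_slope_ge0 : 0 <= s -> ~ proper_along f lam.
Proof.
have [? [c2 [d d0 Hd]]] := hfs; move=> s0 hp.
have [de de0 Hde] := hp c2.
have [t [t0]] : exists t : C, t != 0 /\ cabs t < Num.min (Num.min d de) 1.
  by apply: exists_small_nonzero; rewrite !lt_min d0 de0 ltr01.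
rewrite !lt_min => /andP[/andP[td tde] t1].
have /andP[_ hi] := Hd t t0 td; have := Hde t t0 tde.
have : s * ln (cabs t) <= 0 by rewrite mulr_ge0_le0 // ln_le0 // ltW.
lra.
Qed.

Lemma not_bounded_below_along_of_slope_gt0 : 0 < s -> ~ bounded_below_along f lam.
Proof.
have [? [c2 [d d0 Hd]]] := hfs; move=> s0 [M [de de0 Hde]].
have [dl dl0 Hdl] := ln_lt_near0 ((M - c2) / s).
have [t [t0]] : exists t : C, t != 0 /\ cabs t < Num.min (Num.min d de) dl.
  by apply: exists_small_nonzero; rewrite !lt_min d0 de0 dl0.
rewrite !lt_min => /andP[/andP[td tde] tdl].
have /andP[_ hi] := Hd t t0 td; have := Hde t t0 tde.
have := Hdl _ (cabs_gt0 t0) tdl.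
rewrite -(ltr_pM2l s0) mulrCA mulfV ?lt0r_neq0 // mulr1; lra.
Qed.

End LogLinear.

Unset Implicit Arguments.
Theorem theorem4p3 (R : realType) (N : nat) (G : set 'M[R[i]]_N.+1)
    (hG : algebraic_subgroup G)
    (n m : nat) (rV : 'M[R[i]]_N.+1 -> 'M[R[i]]_n)
    (rW : 'M[R[i]]_N.+1 -> 'M[R[i]]_m)
    (hrV : rational_rep G rV) (hrW : rational_rep G rW)
    (HV : 'M[R[i]]_n) (HW : 'M[R[i]]_m)
    (hHV : hermitian_pd HV) (hHW : hermitian_pd HW)
    (v : 'cV[R[i]]_n) (w : 'cV[R[i]]_m) (hv : v != 0) (hw : w != 0) :
  ((forall lam, one_param_subgroup G lam ->
      proper_along (p_vw rV rW HV HW v w) lam)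
     <-> num_stable G rV rW v w) /\
  ((forall lam, one_param_subgroup G lam ->
      bounded_below_along (p_vw rV rW HV HW v w) lam)
     <-> num_semistable G rV rW v w).
Proof.
have hGu : forall g, G g -> g \in unitmx by case: hG.
have weights lam : one_param_subgroup G lam ->
    exists a b, is_weight rV lam v a /\ is_weight rW lam w b.
  move=> hl; have [a ha] := weight_exists hGu hrV hl hv.
  by have [b hb] := weight_exists hGu hrW hl hw; exists a, b.
have slope lam a b := @p_vw_log_linear R _ _ _ rV rW lam HV HW v w a b hHV hHW.
split; split.
- move=> Hp lam hl a b ha hb; rewrite ltNge; apply/negP => hab.
  apply: not_proper_along_of_slope_ge0 (slope _ _ _ ha hb) _ (Hp lam hl).
  by rewrite pmulr_rge0 // ler0z subr_ge0.
- move=> Hs lam hl; have [a [b [ha hb]]] := weights lam hl.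
  apply: proper_along_of_slope_lt0 (slope _ _ _ ha hb) _.
  by rewrite pmulr_rlt0 // ltrz0 subr_lt0 (Hs lam hl).
- move=> Hb lam hl a b ha hb; rewrite leNgt; apply/negP => hab.
  apply: not_bounded_below_along_of_slope_gt0 (slope _ _ _ ha hb) _ (Hb lam hl).
  by rewrite pmulr_rgt0 // ltr0z subr_gt0.
- move=> Hs lam hl; have [a [b [ha hb]]] := weights lam hl.
  apply: bounded_below_along_of_slope_le0 (slope _ _ _ ha hb) _.
  by rewrite pmulr_rle0 // lerz0 subr_le0 (Hs lam hl).
Qed.
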